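(* Consider the $k$-means++ seeding algorithm on a finite set $\mathbf{X}\subset\mathbb{R}^d$ with a fixed optimal $k$-clustering $P_1,\dots,P_k$. Then for every $t\ge1$, $$\mathbb{E}\big[\widetilde{H}_{t+1}(\mathbf{X})\mid C_t\big]\le\widetilde{H}_t(\mathbf{X}).$$ In particular $\mathbb{E}[\mathrm{cost}(P_i,C_t)\mathbf{1}\{P_i\cap C_t\ne\varnothing\}]$ summed over $i$ is at most $5\,\mathrm{OPT}_k(\mathbf{X})$ for every $t$.
   Context: For a finite set $C\subset\mathbb{R}^d$ and a point $x$, $\mathrm{cost}(x,C)=\min_{c\in C}\|x-c\|^2$; $\mathrm{cost}(\mathbf{Y},C)=\sum_{x\in\mathbf{Y}}\mathrm{cost}(x,C)$; $\mathrm{OPT}_i(\mathbf{Y})=\min_{|C|=i}\mathrm{cost}(\mathbf{Y},C)$. The $k$-means++ seeding algorithm: $c_1$ uniform from $\mathbf{X}$, $C_1=\{c_1\}$; $C_{t+1}=C_t\cup\{x\}$ with $x$ chosen with probability $\mathrm{cost}(x,C_t)/\mathrm{cost}(\mathbf{X},C_t)$. Fix an optimal $k$-means clustering $P_1,\dots,P_k$ of $\mathbf{X}$ (a partition induced by an optimal center set, so $\mathrm{OPT}_k(\mathbf{X})=\sum_i\mathrm{OPT}_1(P_i)$). $P_i$ is covered by $C$ if $C\cap P_i\neq\varnothing$. Define $\widetilde H_t(P_i)=\mathrm{cost}(P_i,C_{t_i})$ if $P_i$ is covered by $C_t$, where $t_i\le t$ is the first time $P_i$ is covered, and $\widetilde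 H_t(P_i)=5\,\mathrm{OPT}_1(P_i)$ otherwise; $\widetilde H_t(\mathbf{X})=\sum_{i=1}^k\widetilde H_t(P_i)$. *)

From HB Require Import structures.
From mathcomp Require Import all_boot all_order all_algebra.
From mathcomp Require Import all_classical all_reals.
Set Implicit Arguments. Unset Strict Implicit. Unset Printing Implicit Defensive.
Import Order.TTheory GRing.Theory Num.Theory.
Local Open Scope classical_set_scope.
Local Open Scope ring_scope.

Definition sqdist (R : realType) (d : nat) (u v : 'rV[R]_d) : R :=
  \sum_(j < d) (u ord0 j - v ord0 j) ^+ 2.

(* cost(v, C) = min_{c in C} ||v - c||^2 ; convention: 0 if C is empty
   (only ever used with nonempty C, except in the first sampling step
   where the sampling distribution is explicitly uniform) *)
Definition costv (R : realType) (d : nat) (v : 'rV[R]_d) (C : seq 'rV[R]_d) : R :=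
  match C with
  | [::] => 0
  | c :: C' => foldr (fun c' m => Num.min (sqdist v c') m) (sqdist v c) C'
  end.

(* the data set X is given as the image of an injective map pos : T -> R^d *)
Definition Xcost (R : realType) (d : nat) (T : finType) (pos : T -> 'rV[R]_d)
  (C : seq 'rV[R]_d) : R := \sum_(x : T) costv (pos x) C.

Definition clcost (R : realType) (d k : nat) (T : finType) (pos : T -> 'rV[R]_d)
  (a : T -> 'I_k) (i : 'I_k) (C : seq 'rV[R]_d) : R :=
  \sum_(x : T | a x == i) costv (pos x) C.

Definition OPT1 (R : realType) (d k : nat) (T : finType) (pos : T -> 'rV[R]_d)
  (a : T -> 'I_k) (i : 'I_k) : R :=
  inf (range (fun c : 'rV[R]_d => \sum_(x : T | a x == i) sqdist (pos x) c)).

Definition OPTk (R : realType) (d : nat) (T : finType) (pos : T -> 'rV[R]_d)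
  (k : nat) : R :=
  inf ((fun c : 'I_k -> 'rV[R]_d => Xcost pos (map c (enum 'I_k)))
         @` [set c | injective c]).

Definition Htilde (R : realType) (d k : nat) (T : finType) (pos : T -> 'rV[R]_d)
  (a : T -> 'I_k) (h : seq T) : R :=
  \sum_(i < k)
    (if has (fun c => a c == i) h
     then clcost pos a i (map pos (take (find (fun c => a c == i) h).+1 h))
     else 5 * OPT1 pos a i).

(* D^2 sampling probability of x given the history h (C_t = centers of h);
   convention: uniform if cost(X, C_t) = 0 *)
Definition step (R : realType) (d : nat) (T : finType) (pos : T -> 'rV[R]_d)
  (h : seq T) (x : T) : R :=
  if 0 < Xcost pos (map pos h)
  then costv (pos x) (map pos h) / Xcost pos (map pos h)
  else (#|T|%:R)^-1.

(* probability that k-means++ produces the history prefix ++ rest, given prefix;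
   the first center is uniform *)
Fixpoint hprob_aux (R : realType) (d : nat) (T : finType) (pos : T -> 'rV[R]_d)
  (prefix rest : seq T) : R :=
  match rest with
  | [::] => 1
  | x :: r =>
      (if prefix is [::] then (#|T|%:R)^-1 else step pos prefix x)
      * hprob_aux pos (rcons prefix x) r
  end.

Definition hprob (R : realType) (d : nat) (T : finType) (pos : T -> 'rV[R]_d)
  (h : seq T) : R := hprob_aux pos [::] h.

From HB Require Import structures.
From mathcomp Require Import all_boot all_order all_algebra.
From mathcomp Require Import all_classical all_reals.
From mathcomp Require Import lra.
Import Order.TTheory GRing.Theory Num.Theory.
Local Open Scope ring_scope.
Set Implicit Arguments. Unset Strict Implicit.

(* [Htilde] charges each optimal cluster [P_i] its cost at the time it was
   first covered (then frozen), or [5 OPT1 P_i] while it is uncovered.  A step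
   only changes the term of the cluster receiving the new center, so it
   suffices to bound, for an uncovered [P_i], the cost of [P_i] after adding a
   center [c] sampled in [P_i] with weight [D c] (its current cost).  That cost
   is [sum_x min (D x) |x - c|^2]; symmetrizing in [(c, x)] and using the
   relaxed triangle inequality bounds twice the expectation by
   [5 sum_(c, x) min (D c) (D x) |c - x|^2], and since the min kernel is
   positive semidefinite this is at most [10 (sum D) cost(P_i, z)] for every
   center [z], hence [10 (sum D) OPT1 P_i].  The first, uniform, center is
   handled by the same kernel bound with unit weights. *)

Section SquaredDistance.
Variables (R : realType) (d : nat).
Implicit Types (u v w : 'rV[R]_d) (C : seq 'rV[R]_d).

Lemma sqdist_ge0 u v : 0 <= sqdist u v.
Proof. by apply: sumr_ge0 => j _; apply: sqr_ge0. Qed.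

Lemma sqdistC u v : sqdist u v = sqdist v u.
Proof. by apply: eq_bigr => j _; rewrite -sqrrN opprB. Qed.

Lemma sqdist_eq0 u v : sqdist u v = 0 -> u = v.
Proof.
move=> /eqP; rewrite psumr_eq0 => [/allP uv|j _]; last exact: sqr_ge0.
apply/rowP => j; apply/eqP; rewrite -subr_eq0 -sqrf_eq0.
by apply: uv; rewrite mem_index_enum.
Qed.

Lemma sqdist_tri u v w : sqdist u w <= 2 * sqdist u v + 2 * sqdist v w.
Proof.
rewrite /sqdist !mulr_sumr -big_split /=; apply: ler_sum => j _.
have := sqr_ge0 (u ord0 j - 2 * v ord0 j + w ord0 j); rewrite !expr2; nra.
Qed.

Lemma costv_spec v c C :
  (forall e, e \in c :: C -> costv v (c :: C) <= sqdist v e) /\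
  exists2 e, e \in c :: C & costv v (c :: C) = sqdist v e.
Proof.
rewrite /=; elim: C => [|c' C [IHle [e0 e0C IHe]]] /=.
  by split=> [e|]; [rewrite inE => /eqP -> | exists c; rewrite ?inE].
set m := foldr _ _ C in IHle IHe *; split.
  move=> e; rewrite !inE => /or3P [/eqP->|/eqP->|eC'].
  - by rewrite ge_min IHle ?inE ?eqxx ?orbT.
  - by rewrite ge_min lexx.
  - by rewrite ge_min IHle ?inE ?eC' ?orbT.
case: (leP (sqdist v c') m) => _.
  by exists c'; rewrite ?inE ?eqxx ?orbT.
by exists e0 => //; move: e0C; rewrite !inE => /orP [->|->]; rewrite ?orbT.
Qed.

Lemma costv_le v C e : e \in C -> costv v C <= sqdist v e.
Proof. by case: C => // c C; case: (costv_spec v c C) => le _; apply: le. Qed.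

Lemma costv_att v C : C != [::] -> exists2 e, e \in C & costv v C = sqdist v e.
Proof. by case: C => // c C _; case: (costv_spec v c C). Qed.

Lemma costv_ge0 v C : 0 <= costv v C.
Proof.
by case: C => // c C; have [e _ ->] := costv_att v (isT : c :: C != [::]);
  apply: sqdist_ge0.
Qed.

Lemma costv_catl v C1 C2 : C1 != [::] -> costv v (C1 ++ C2) <= costv v C1.
Proof. by move=> /(costv_att v) [e eC ->]; apply: costv_le; rewrite mem_cat eC. Qed.

Lemma costv_rcons v C c : C != [::] ->
  costv v (rcons C c) = Num.min (costv v C) (sqdist v c).
Proof.
move=> C0; apply/eqP; rewrite eq_le le_min -cats1 costv_catl //=.
rewrite costv_le ?mem_cat ?mem_seq1 ?eqxx ?orbT //=.
have [|e] := costv_att v (C := C ++ [:: c]); first by case: (C) C0.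
rewrite mem_cat mem_seq1 => /orP [eC|/eqP->] ->; last by rewrite ge_min lexx orbT.
by rewrite ge_min costv_le.
Qed.

Lemma costv_tri u v C : C != [::] -> costv u C <= 2 * costv v C + 2 * sqdist u v.
Proof.
move=> /(costv_att v) [e eC ->]; apply: le_trans (costv_le u eC) _.
by rewrite addrC; apply: sqdist_tri.
Qed.

End SquaredDistance.

Section MinKernel.
Variable R : realType.

(* The elementary inequality behind the factor 5: if [P] and [Q] are two
   costs that differ by at most the relaxed triangle inequality along a
   segment of squared length [r], then the two "cross" sampling terms are
   bounded by [5 min(P, Q) r]. *)
Lemma cross_cost_bound (P Q r : R) : 0 <= P -> 0 <= Q -> 0 <= r ->
  P <= 2 * Q + 2 * r -> Q <= 2 * P + 2 * r ->
  P * Num.min Q r + Q * Num.min P r <= 5 * Num.min P Q * r.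
Proof.
move=> P0 Q0 r0 PQ QP.
by case: (leP Q r) => ?; case: (leP P r) => ?; case: (leP P Q) => ?; nra.
Qed.

Lemma min_shift (a b m : R) : Num.min a b = m + Num.min (a - m) (b - m).
Proof. by case: (leP a b) => ?; case: (leP (a - m) (b - m)) => ?; lra. Qed.

(* The kernel (c, x) |-> min (w c) (w x) is positive semidefinite for
   nonnegative weights: peel off the smallest weight, which contributes a
   square, and recurse on the remaining points. *)
Lemma min_kernel_psd (I : finType) (A : {set I}) (w u : I -> R) :
  {in A, forall i, 0 <= w i} ->
  0 <= \sum_(c in A) \sum_(x in A) Num.min (w c) (w x) * (u c * u x).
Proof.
have [n] := ubnP #|A|; elim: n A w => // n IH A w ltAn w0.
have [->|[z0 Az0]] := set_0Vmem A; first by rewrite big_set0.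
have [z Az zmin] : exists2 z, z \in A & forall i, i \in A -> w z <= w i.
  by case: (@arg_minP _ _ _ z0 (mem A) w Az0) => z Az zm; exists z.
pose w' i := w i - w z.
have w'0 : {in A, forall i, 0 <= w' i} by move=> i /zmin; rewrite subr_ge0.
have w'z0 x : x \in A -> Num.min (w' z) (w' x) = 0.
  by move=> /w'0 x0; rewrite /w' subrr (min_idPl x0).
have drop_z : \sum_(c in A) \sum_(x in A) Num.min (w' c) (w' x) * (u c * u x) =
    \sum_(c in A :\ z) \sum_(x in A :\ z) Num.min (w' c) (w' x) * (u c * u x).
  rewrite (big_setD1 _ Az) /= big1 ?add0r => [|x Ax]; last by rewrite w'z0 ?mul0r.
  apply: eq_bigr => c /setD1P [_ Ac].
  by rewrite (big_setD1 _ Az) /= minC w'z0 // mul0r add0r.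
have -> : \sum_(c in A) \sum_(x in A) Num.min (w c) (w x) * (u c * u x) =
    w z * (\sum_(c in A) u c) ^+ 2 +
    \sum_(c in A :\ z) \sum_(x in A :\ z) Num.min (w' c) (w' x) * (u c * u x).
  rewrite -drop_z expr2 mulr_suml mulr_sumr -big_split; apply: eq_bigr => c _.
  rewrite mulr_sumr mulr_sumr -big_split; apply: eq_bigr => x _ /=.
  by rewrite (min_shift _ _ (w z)) mulrDl mulrA.
apply: addr_ge0; first by apply: mulr_ge0; [exact: w0 | exact: sqr_ge0].
apply: IH => [|i /setD1P [_ /w'0] //].
by move: ltAn; rewrite (cardsD1 z) Az.
Qed.

(* Consequently, for nonnegative weights summing to [W], the min-weighted
   sum of squared pairwise differences is at most twice [W] times the sum of
   squares: the quadratic form splits into two diagonal parts and a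
   nonpositive cross term. *)
Lemma min_kernel_sqdiff (I : finType) (A : {set I}) (w u : I -> R) :
  {in A, forall i, 0 <= w i} ->
  \sum_(c in A) \sum_(x in A) Num.min (w c) (w x) * (u c - u x) ^+ 2
  <= 2 * (\sum_(c in A) w c) * \sum_(c in A) u c ^+ 2.
Proof.
move=> w0; set W := \sum_(c in A) w c.
set S1 := \sum_(c in A) \sum_(x in A) Num.min (w c) (w x) * u c ^+ 2.
set S2 := \sum_(c in A) \sum_(x in A) Num.min (w c) (w x) * (u c * u x).
have S1_le : S1 <= W * \sum_(c in A) u c ^+ 2.
  rewrite mulr_sumr; apply: ler_sum => c Ac; rewrite -mulr_suml.
  apply: ler_wpM2r; first exact: sqr_ge0.
  by apply: ler_sum => x _; rewrite ge_min lexx orbT.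
have S1_sym : \sum_(c in A) \sum_(x in A) Num.min (w c) (w x) * u x ^+ 2 = S1.
  by rewrite exchange_big; apply: eq_bigr => c _; apply: eq_bigr => x _; rewrite minC.
have expand : \sum_(c in A) \sum_(x in A) Num.min (w c) (w x) * (u c - u x) ^+ 2
    = S1 + S1 - 2 * S2.
  rewrite -[in X in _ + X - _]S1_sym /S1 /S2 mulr_sumr -sumrN -!big_split.
  apply: eq_bigr => c _; rewrite mulr_sumr -sumrN -!big_split.
  by apply: eq_bigr => x _ /=; nra.
have := min_kernel_psd u w0; rewrite -/S2 expand; lra.
Qed.

End MinKernel.

Section ClusterKernel.
Variables (R : realType) (d : nat).

Lemma min_kernel_sqdist (I : finType) (A : {set I}) (w : I -> R)
    (p : I -> 'rV[R]_d) (z : 'rV[R]_d) : {in A, forall i, 0 <= w i} ->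
  \sum_(c in A) \sum_(x in A) Num.min (w c) (w x) * sqdist (p c) (p x)
  <= 2 * (\sum_(c in A) w c) * \sum_(c in A) sqdist (p c) z.
Proof.
move=> w0; pose q c j := p c ord0 j - z ord0 j.
have -> : \sum_(c in A) \sum_(x in A) Num.min (w c) (w x) * sqdist (p c) (p x)
    = \sum_(j < d) \sum_(c in A) \sum_(x in A)
        Num.min (w c) (w x) * (q c j - q x j) ^+ 2.
  rewrite [RHS]exchange_big; apply: eq_bigr => c _.
  rewrite [RHS]exchange_big; apply: eq_bigr => x _; rewrite mulr_sumr; apply: eq_bigr => j _.
  by congr (_ * _ ^+ 2); rewrite /q opprB addrA subrK.
rewrite /sqdist [X in _ <= _ * X]exchange_big mulr_sumr; apply: ler_sum => j _.
exact: min_kernel_sqdiff.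
Qed.

(* Let [D] be a nonnegative
   weight satisfying the relaxed triangle inequality, typically the current
   cost of a point.  Sampling [c] in [A] with weight [D c] and capping every
   [D x] by the squared distance to [c] (i.e. adding [c] as a center) leaves
   at most five times the cost of [A] around any [z], both sides being
   multiplied by the total weight of [A]. *)
Lemma cluster_sampling_bound (I : finType) (A : {set I}) (p : I -> 'rV[R]_d)
    (D : I -> R) (z : 'rV[R]_d) : (forall x, 0 <= D x) ->
    (forall x y, D x <= 2 * D y + 2 * sqdist (p x) (p y)) ->
  \sum_(c in A) D c * \sum_(x in A) Num.min (D x) (sqdist (p x) (p c))
  <= 5 * (\sum_(c in A) D c) * \sum_(x in A) sqdist (p x) z.
Proof.
move=> D0 Dtri; set L := \sum_(c in A) _.
have L_sym : L = \sum_(c in A) \sum_(x in A)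
    D x * Num.min (D c) (sqdist (p c) (p x)).
  by rewrite /L exchange_big; apply: eq_bigr => c _; rewrite mulr_sumr.
have twoL : L + L <= 5 * \sum_(c in A) \sum_(x in A)
    Num.min (D c) (D x) * sqdist (p c) (p x).
  rewrite {1}/L L_sym -big_split mulr_sumr; apply: ler_sum => c _ /=.
  rewrite mulr_sumr -big_split mulr_sumr; apply: ler_sum => x _ /=.
  rewrite mulrA [sqdist (p x) (p c)]sqdistC.
  by apply: cross_cost_bound; rewrite ?sqdist_ge0 // sqdistC.
have := min_kernel_sqdist (A := A) p z (fun x _ => D0 x); lra.
Qed.

Lemma pairwise_sqdist_bound (I : finType) (A : {set I}) (p : I -> 'rV[R]_d)
    (z : 'rV[R]_d) :
  \sum_(c in A) \sum_(x in A) sqdist (p x) (p c)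
  <= 2 * #|A|%:R * \sum_(x in A) sqdist (p x) z.
Proof.
have := min_kernel_sqdist (A := A) p z (w := fun _ => 1) (fun _ _ => ler01).
rewrite sumr_const minxx; apply: le_trans; apply: ler_sum => c _.
by apply: ler_sum => x _; rewrite mul1r sqdistC.
Qed.

End ClusterKernel.

Section TupleSums.
Variables (V : nmodType) (T : finType).

(* Sums over tuples, peeled one coordinate at a time: the summation form of
   running the sampling process for one more step. *)
Lemma big_tuple0 (F : 0.-tuple T -> V) : \sum_(u : 0.-tuple T) F u = F [tuple].
Proof.
rewrite (eq_bigr (fun _ => F [tuple])) => [|u _]; last by rewrite tuple0.
by rewrite sumr_const card_tuple expn0.
Qed.

Lemma big_tuple_cons t (F : t.+1.-tuple T -> V) :
  \sum_(u : t.+1.-tuple T) F u = \sum_x \sum_(h : t.-tuple T) F [tuple of x :: h].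
Proof.
rewrite pair_bigA /= (reindex (fun p : T * t.-tuple T => [tuple of p.1 :: p.2])) //=.
exists (fun u : t.+1.-tuple T => (thead u, [tuple of behead u])).
  by case=> x h _ /=; congr pair; apply: val_inj.
by move=> u _; rewrite [RHS]tuple_eta.
Qed.

End TupleSums.

Section KMeansPP.
Variables (R : realType) (d k : nat) (T : finType) (pos : T -> 'rV[R]_d).
Variable a : T -> 'I_k.

Definition cluster (i : 'I_k) : {set T} := [set x | a x == i].

Lemma sum_cluster i (F : T -> R) :
  \sum_(x | a x == i) F x = \sum_(x in cluster i) F x.
Proof. by apply: eq_bigl => x; rewrite inE. Qed.

Lemma OPT1_le i z : OPT1 pos a i <= \sum_(x | a x == i) sqdist (pos x) z.
Proof.
apply: ge_inf; last by exists z.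
by exists 0 => _ [c _ <-]; apply: sumr_ge0 => x _; apply: sqdist_ge0.
Qed.

Lemma OPT1_ge0 i : 0 <= OPT1 pos a i.
Proof.
apply: lb_le_inf; first by exists (\sum_(x | a x == i) sqdist (pos x) 0), 0.
by move=> _ [c _ <-]; apply: sumr_ge0 => x _; apply: sqdist_ge0.
Qed.

Lemma le_OPT1 i (L K : R) : 0 <= K ->
  (forall z, L <= K * \sum_(x | a x == i) sqdist (pos x) z) ->
  L <= K * OPT1 pos a i.
Proof.
rewrite le0r => /orP [/eqP-> /(_ 0)|K0 LK]; first by rewrite !mul0r.
rewrite -ler_pdivrMl //; apply: lb_le_inf.
  by exists (\sum_(x | a x == i) sqdist (pos x) 0), 0.
by move=> _ [z _ <-]; rewrite ler_pdivrMl.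
Qed.

Definition Hterm (h : seq T) (i : 'I_k) : R :=
  if has (fun c => a c == i) h
  then clcost pos a i (map pos (take (find (fun c => a c == i) h).+1 h))
  else 5 * OPT1 pos a i.

Lemma HtildeE h : Htilde pos a h = \sum_i Hterm h i.
Proof. by []. Qed.

Lemma Hterm_rcons_covered h x i :
  has (fun c => a c == i) h -> Hterm (rcons h x) i = Hterm h i.
Proof.
move=> hi; rewrite /Hterm has_rcons hi orbT -cats1 find_cat hi takel_cat //.
by rewrite -has_find.
Qed.

Lemma Hterm_rcons_uncovered h x i : ~~ has (fun c => a c == i) h ->
  Hterm (rcons h x) i =
  if a x == i then clcost pos a i (map pos (rcons h x)) else 5 * OPT1 pos a i.
Proof.
move=> /negbTE hi; rewrite /Hterm has_rcons hi orbF; case: ifP => // xi.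
by rewrite -cats1 find_cat hi /= xi addn0 take_oversize // size_cat addn1.
Qed.

(* The current cost of [x] given the history [h]: the weight of [x] in the
   D^2 sampling of the next center. *)
Definition dcost (h : seq T) (x : T) : R := costv (pos x) (map pos h).

Lemma dcost_ge0 h x : 0 <= dcost h x.
Proof. exact: costv_ge0. Qed.

(* For an
   uncovered [P_i] this is [cluster_sampling_bound], optimized over [z]. *)
Lemma Hterm_D2_step h i : h != [::] ->
  \sum_x dcost h x * Hterm (rcons h x) i <= \sum_x dcost h x * Hterm h i.
Proof.
move=> h0; have C0 : map pos h != [::] by case: (h) h0.
have [hi|/negbTE hi] := boolP (has (fun c => a c == i) h).
  by apply: ler_sum => x _; rewrite Hterm_rcons_covered.
rewrite (bigID (fun x => a x == i)) [leRHS](bigID (fun x => a x == i)) /=.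
apply: lerD; last first.
  apply: ler_sum => x /negbTE xi.
  by rewrite Hterm_rcons_uncovered ?hi // xi /Hterm hi.
rewrite -mulr_suml [Hterm h i]/Hterm hi mulrCA mulrA; apply: le_OPT1.
  by rewrite mulr_ge0 // sumr_ge0 // => x _; apply: dcost_ge0.
move=> z; rewrite !sum_cluster.
have tri x y : dcost h x <= 2 * dcost h y + 2 * sqdist (pos x) (pos y).
  exact: costv_tri.
apply: le_trans (cluster_sampling_bound (cluster i) z (dcost_ge0 h) tri).
apply: ler_sum => c ci; rewrite Hterm_rcons_uncovered ?hi //.
move: ci; rewrite inE => ->; rewrite /clcost sum_cluster map_rcons.
by under eq_bigr => x _ do rewrite costv_rcons //.
Qed.

Lemma Htilde_D2_step h : h != [::] ->
  \sum_x dcost h x * Htilde pos a (rcons h x)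
  <= (\sum_x dcost h x) * Htilde pos a h.
Proof.
move=> h0; rewrite mulr_suml.
under eq_bigr => x _ do rewrite HtildeE mulr_sumr.
under [leRHS]eq_bigr => x _ do rewrite HtildeE mulr_sumr.
by rewrite exchange_big [leRHS]exchange_big; apply: ler_sum => i _; apply: Hterm_D2_step.
Qed.

(* A point of cost zero is already a center: the data points are distinct. *)
Lemma dcost_eq0_mem h x : injective pos -> h != [::] -> dcost h x = 0 -> x \in h.
Proof.
move=> posI h0; have C0 : map pos h != [::] by case: (h) h0.
rewrite /dcost; have [_ /mapP [y yh ->] ->] := costv_att (pos x) C0.
by move=> /sqdist_eq0 /posI ->.
Qed.

Lemma Htilde_rcons_mem h x : x \in h -> Htilde pos a (rcons h x) = Htilde pos a h.
Proof.
move=> xh; rewrite !HtildeE; apply: eq_bigr => i _.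
have [hi|hi] := boolP (has (fun c => a c == i) h); first exact: Hterm_rcons_covered.
rewrite Hterm_rcons_uncovered //; case: ifPn => [xi|_]; last by rewrite /Hterm (negbTE hi).
by move: hi => /hasPn /(_ x xh); rewrite xi.
Qed.

(* The k-means++ step from a nonempty history: [Htilde] is a
   supermartingale.  When every point has cost zero the (uniform) step only
   repeats existing centers and [Htilde] is unchanged. *)
Lemma Htilde_step h : injective pos -> h != [::] ->
  \sum_x step pos h x * Htilde pos a (rcons h x) <= Htilde pos a h.
Proof.
move=> posI h0; rewrite /step -/(dcost h _).
have -> : Xcost pos (map pos h) = \sum_x dcost h x by [].
have [Phi0|Phi_le0] := ltP 0 (\sum_x dcost h x).
  under eq_bigr => x _ do rewrite mulrAC.
  by rewrite -mulr_suml ler_pdivrMr // mulrC Htilde_D2_step.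
have Phi0 : \sum_x dcost h x = 0.
  by apply/eqP; rewrite eq_le Phi_le0 sumr_ge0 // => y _; apply: dcost_ge0.
have dcost0 x : dcost h x = 0.
  by apply: (psumr_eq0P _ Phi0) => // y _; apply: dcost_ge0.
under eq_bigr => x _ do rewrite Htilde_rcons_mem ?(dcost_eq0_mem posI h0 (dcost0 x)) //.
have T0 : #|T|%:R != 0 :> R.
  by case: (h) h0 => // y ? _; rewrite pnatr_eq0 -lt0n; apply/card_gt0P; exists y.
by rewrite -mulr_suml sumr_const -[_^-1 *+ _]mulr_natr mulVf ?mul1r.
Qed.

(* The first, uniformly sampled center, cluster by cluster: choosing a
   uniform point of [P_i] as its center costs on average at most twice
   [OPT1 i] (the kernel bound with unit weights), and less than [5 OPT1 i]. *)
Lemma Hterm_first_step i : \sum_x Hterm [:: x] i <= #|T|%:R * Hterm [::] i.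
Proof.
have first x : Hterm [:: x] i =
    if a x == i then clcost pos a i [:: pos x] else 5 * OPT1 pos a i.
  exact: (Hterm_rcons_uncovered (h := [::])).
have -> : #|T|%:R * Hterm [::] i = \sum_(x : T) 5 * OPT1 pos a i.
  by rewrite sumr_const mulr_natl.
rewrite (bigID (fun x => a x == i)) [leRHS](bigID (fun x => a x == i)) /=.
apply: lerD; last by apply: ler_sum => x /negbTE xi; rewrite first xi.
rewrite -mulr_suml; apply: le_OPT1 => [|z]; first exact: sumr_ge0.
under eq_bigr => x xi do rewrite first xi /clcost /= sum_cluster.
rewrite !sum_cluster sumr_const -mulr_natr.
have S0 : 0 <= #|cluster i|%:R * \sum_(x in cluster i) sqdist (pos x) z.
  by rewrite mulr_ge0 // sumr_ge0 // => x _; apply: sqdist_ge0.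
have := pairwise_sqdist_bound (cluster i) pos z; lra.
Qed.

Definition next_prob (h : seq T) (x : T) : R :=
  if h is [::] then #|T|%:R^-1 else step pos h x.

Lemma next_prob_ge0 h x : 0 <= next_prob h x.
Proof.
rewrite /next_prob /step; case: h => [|y h]; first by rewrite invr_ge0.
by case: ifP => [/ltW/(divr_ge0 (costv_ge0 _ _))|_]; rewrite ?invr_ge0.
Qed.

Lemma hprob_aux_cons p x r :
  hprob_aux pos p (x :: r) = next_prob p x * hprob_aux pos (rcons p x) r.
Proof. by []. Qed.

Lemma hprob_aux_ge0 p h : 0 <= hprob_aux pos p h.
Proof.
by elim: h p => [|x h IH] p; rewrite ?hprob_aux_cons ?mulr_ge0 ?next_prob_ge0.
Qed.

Lemma Htilde_supermartingale h : injective pos ->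
  \sum_x next_prob h x * Htilde pos a (rcons h x) <= Htilde pos a h.
Proof.
case: h => [_|y h posI]; last exact: Htilde_step.
rewrite /next_prob -mulr_sumr.
have [T0|T0] := posnP #|T|.
  by rewrite T0 invr0 mul0r sumr_ge0 // => i _; rewrite mulr_ge0 ?OPT1_ge0.
rewrite ler_pdivrMl ?ltr0n //; under eq_bigr => x _ do rewrite HtildeE.
by rewrite exchange_big HtildeE mulr_sumr; apply: ler_sum => i _; apply: Hterm_first_step.
Qed.

Lemma expected_Htilde t p : injective pos ->
  \sum_(h : t.-tuple T) hprob_aux pos p h * Htilde pos a (p ++ h)
  <= Htilde pos a p.
Proof.
move=> posI; elim: t p => [|t IH] p.
  by rewrite big_tuple0 /= cats0 mul1r.
rewrite big_tuple_cons; apply: le_trans (Htilde_supermartingale p posI).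
apply: ler_sum => x _.
apply: le_trans (ler_wpM2l (next_prob_ge0 p x) (IH (rcons p x))).
by rewrite mulr_sumr; apply: ler_sum => h _; rewrite hprob_aux_cons -cat_rcons mulrA.
Qed.

Lemma Htilde_nil : Htilde pos a [::] = 5 * \sum_i OPT1 pos a i.
Proof. by rewrite HtildeE mulr_sumr. Qed.

(* [Htilde] dominates the cost of the covered clusters: a cluster's cost
   only decreases after it is first covered. *)
Lemma covered_cost_le_Htilde h :
  \sum_(i < k) (if has (fun c => a c == i) h then clcost pos a i (map pos h) else 0)
  <= Htilde pos a h.
Proof.
rewrite HtildeE; apply: ler_sum => i _; rewrite /Hterm.
case: ifP => hi; last by rewrite mulr_ge0 ?OPT1_ge0.
apply: ler_sum => x _; set n := (find _ h).+1.
rewrite -{1}(cat_take_drop n h) map_cat costv_catl //.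
by case: (h) hi.
Qed.

Lemma sum_OPT1_le (c : 'I_k -> 'rV[R]_d) :
  (forall x, sqdist (pos x) (c (a x)) = costv (pos x) (map c (enum 'I_k))) ->
  \sum_i OPT1 pos a i <= Xcost pos (map c (enum 'I_k)).
Proof.
move=> closest; rewrite /Xcost (partition_big a predT) //=.
apply: ler_sum => i _; apply: le_trans (OPT1_le i (c i)) _.
by apply: ler_sum => x /eqP xi; rewrite -closest xi.
Qed.

End KMeansPP.

Unset Implicit Arguments. Set Strict Implicit.

Theorem mainTheorem6 (R : realType) (d k : nat) (T : finType)
  (pos : T -> 'rV[R]_d) (cstar : 'I_k -> 'rV[R]_d) (a : T -> 'I_k) :
  injective pos ->
  injective cstar ->
  (forall x : T, sqdist (pos x) (cstar (a x)) = costv (pos x) (map cstar (enum 'I_k))) ->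
  Xcost pos (map cstar (enum 'I_k)) = OPTk pos k ->
  (forall h : seq T, (1 <= size h)%N -> 0 < hprob pos h ->
     \sum_(x : T) step pos h x * Htilde pos a (rcons h x) <= Htilde pos a h)
  /\
  (forall t : nat,
     \sum_(h : t.-tuple T) hprob pos h *
        (\sum_(i < k) (if has (fun c => a c == i) h
                       then clcost pos a i (map pos h) else 0))
     <= 5 * OPTk pos k).
Proof.
move=> posI _ closest opt; split=> [h|t].
  by move=> h1 _; apply: Htilde_step => //; case: h h1.
have OPT1_le_OPTk : \sum_i OPT1 pos a i <= OPTk pos k.
  by rewrite -opt; apply: sum_OPT1_le.
apply: le_trans (ler_wpM2l _ OPT1_le_OPTk) => //; rewrite -Htilde_nil.
apply: le_trans (expected_Htilde a t [::] posI); apply: ler_sum => h _.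
by apply: ler_wpM2l; [apply: hprob_aux_ge0 | apply: covered_cost_le_Htilde].
Qed.
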